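(* Let $p$ be a prime, $m\geq 1$ an integer, $E=\bigcup_{i=0}^{m-1}p^i\mathbb{Z}_p^\times$ identified with $\mathbb{Q}_p^\ast/p^{m\mathbb{Z}}$, and let $D$ be the operator on functions on $E$ given by $$D\phi(x)=-c_p\int_E H(z,x)\big(\phi(z)-\phi(x)\big)\,d^\ast z,\qquad c_p=\frac{p(1-p^{-1})^2}{1-p^{-2}},$$ $$H(z,x)=\frac{|x|\,|z|}{|x-z|^2}+\frac{1}{p^m-1}\Big(\frac{|x|}{|z|}+\frac{|z|}{|x|}\Big).$$ Every continuous multiplicative character $\pi$ of $\mathbb{Q}_p^\ast/p^{m\mathbb{Z}}$ is an eigenfunction of $D$. Writing $\pi(p^k u)=\zeta(k)\hat\pi(u)$ for $k\in\mathbb{Z}/m\mathbb{Z}$, $u\in\mathbb{Z}_p^\times$, with $\zeta$ a character of $\mathbb{Z}/m\mathbb{Z}$ and $\hat\pi$ a continuous character of $\mathbb{Z}_p^\times$, the eigenvalue is: (i) if $\hat\pi$ is nontrivial with conductor $n\geq 1$: $\lambda=(p-1)p^{n-1}$ (independent of $\zeta$ and of $m$); (ii) if $\hat\pi$ is trivial and $\zeta(1)=\omega$ (an $m$-th root of unity): $\lambda=\dfrac{p(p-1)(2-\omega-\overline{\omega})}{p^2-p(\omega+\overline{\omega})+1}$.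
   Context: $|x|=p^{-v(x)}$ with $v$ the $p$-adic valuation; $dx$ is the additive Haar measure with $\mathbb{Z}_p$ of measure $1$ and $d^\ast x=dx/|x|$. Products of elements of $E$ are taken modulo $p^{m\mathbb{Z}}$ with representative in $E$. The conductor of a nontrivial character $\hat\pi$ of $\mathbb{Z}_p^\times$ is the smallest integer $n\geq 1$ such that $\hat\pi$ is trivial on $1+p^n\mathbb{Z}_p$. *)

From HB Require Import structures.
From mathcomp Require Import all_boot all_order all_algebra.
From mathcomp Require Import all_classical all_reals all_analysis.
From mathcomp Require Import complex.
Set Implicit Arguments. Unset Strict Implicit. Unset Printing Implicit Defensive.
Import Order.TTheory GRing.Theory Num.Theory.
Import numFieldNormedType.Exports.
Local Open Scope classical_set_scope.
Local Open Scope ring_scope.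

(* p-adic integers Z_p as compatible systems of residues:                    *)
(*   zres x k = (x mod p^k), represented in [0, p^k).                        *)
Record zp (p : nat) := Zp {
  zres : nat -> nat ;
  zres_mod : forall k, (zres k %% p ^ k = zres k)%N ;
  zres_compat : forall k, (zres k.+1 %% p ^ k = zres k)%N }.

Lemma dvdn_exp_succ (p k : nat) : (p ^ k %| p ^ k.+1)%N.
Proof. by rewrite expnS dvdn_mull. Qed.

Definition zp_of_nat (p r : nat) : zp p.
Proof.
refine (@Zp p (fun k => r %% p ^ k)%N _ _) => k.
- by rewrite modn_mod.
- by rewrite modn_dvdm // dvdn_exp_succ.
Defined.

Definition zmul (p : nat) (x y : zp p) : zp p.
Proof.
refine (@Zp p (fun k => (zres x k * zres y k) %% p ^ k)%N _ _) => k.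
- by rewrite modn_mod.
- rewrite modn_dvdm ?dvdn_exp_succ //.
  by rewrite -modnMm -(zres_compat x k) -(zres_compat y k) modnMm.
Defined.

Definition zcong (p k : nat) (x y : zp p) : bool := (zres x k == zres y k).

Definition zunit (p : nat) (x : zp p) : bool := (zres x 1 != 0)%N.

(* p-adic valuation of x - y (for x <> y): the largest k with x = y mod p^k *)
Definition zval_diff (p : nat) (x y : zp p) : nat :=
  match pselect (exists k, ~~ zcong k x y) with
  | left H => (ex_minn (P := fun k => ~~ zcong k x y)
                 (let: ex_intro k Hk := H in ex_intro _ k Hk)).-1
  | right _ => 0%N
  end.

Section Padic.
Variable R : realType.
Local Notation C := R[i].

Definition zdist (p : nat) (x y : zp p) : C :=
  if pselect (exists k, ~~ zcong k x y) then (p%:R ^- zval_diff x y) else 0.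

(* An element x = p^i u of E is represented by the pair (i, u) with i < m    *)
(* and u a unit of Z_p.                                                      *)
Definition Ept (p : nat) := (nat * zp p)%type.

Definition in_E (p m : nat) (x : Ept p) : bool := (x.1 < m)%N && zunit x.2.

Definition Emul (p m : nat) (x y : Ept p) : Ept p :=
  ((x.1 + y.1) %% m, zmul x.2 y.2)%N.

Definition Eemb (p : nat) (x : Ept p) : zp p := zmul (zp_of_nat p (p ^ x.1)) x.2.

Definition Eabs (p : nat) (x : Ept p) : C := p%:R ^- x.1.

Definition Edist (p : nat) (x z : Ept p) : C := zdist (Eemb x) (Eemb z).

(* The multiplicative Haar integral over E (d*z = dz/|z|, Z_p of dz-measure 1):
   limit of Riemann sums over the classes p^i (r + p^N Z_p), i < m,
   0 <= r < p^N, p not dividing r, each of d*z-measure p^{-N}, evaluated at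
   the representative p^i r. *)
Definition riemann_sum (p m : nat) (f : Ept p -> C) (N : nat) : C :=
  \sum_(i < m) \sum_(r < p ^ N | (r %% p != 0)%N)
     f (nat_of_ord i, zp_of_nat p r) * p%:R ^- N.

Definition Clim (u : nat -> C) : C :=
  (limn (fun n => complex.Re (u n)) +i* limn (fun n => complex.Im (u n)))%C.

Definition Eintegral (p m : nat) (f : Ept p -> C) : C :=
  Clim (riemann_sum m f).

Definition cp (p : nat) : C :=
  p%:R * (1 - p%:R^-1) ^+ 2 / (1 - p%:R ^- 2).

Definition Hker (p m : nat) (z x : Ept p) : C :=
  Eabs x * Eabs z / (Edist x z) ^+ 2
  + (p%:R ^+ m - 1)^-1 * (Eabs x / Eabs z + Eabs z / Eabs x).

Definition Dop (p m : nat) (phi : Ept p -> C) (x : Ept p) : C :=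
  - cp p * Eintegral m (fun z => Hker m z x * (phi z - phi x)).

Definition Echaracter (p m : nat) (pi : Ept p -> C) : Prop :=
  [/\ (forall x, in_E m x -> pi x != 0),
      (forall x y, in_E m x -> in_E m y -> pi (Emul m x y) = pi x * pi y) &
      (forall x, in_E m x -> forall eps : R, 0 < eps ->
         exists k, forall y, in_E m y -> y.1 = x.1 -> zcong k y.2 x.2 ->
           `|pi y - pi x| < (eps%:C)%C)].

Definition pihat (p : nat) (pi : Ept p -> C) (u : zp p) : C := pi (0%N, u).

Definition trivial_on (p : nat) (chi : zp p -> C) (k : nat) : Prop :=
  forall u, zunit u -> zcong k u (zp_of_nat p 1) -> chi u = 1.

Definition char_trivial (p : nat) (chi : zp p -> C) : Prop :=
  forall u, zunit u -> chi u = 1.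

Definition conductor (p : nat) (chi : zp p -> C) (n : nat) : Prop :=
  [/\ (1 <= n)%N, trivial_on chi n & forall k, (1 <= k < n)%N -> ~ trivial_on chi k].

End Padic.

(* Write pi (p^i u) = w^i chi(u) and x = p^a u, and split the integral defining
   D pi (x) along the shells p^i Z_p^*.  Off the shell of x, H(z, x) depends only
   on i - a mod m, so these shells contribute a discrete Fourier transform of that
   kernel at w, weighted by the mean of chi over Z_p^* (zero when chi is
   nontrivial).  On the shell of x, |u - v|^-2 - 1 is the layer cake
   sum_k (p^2k - p^(2k-2)) [u = v mod p^k], and by orthogonality chi - chi(u)
   averages to -chi(u) over u + p^k Z_p exactly when k is below the conductor.
   Hence the Riemann sums are constant as soon as the mesh is finer than the
   conductor, and both eigenvalues reduce to geometric sums. *)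

From HB Require Import structures.
From mathcomp Require Import all_boot all_order all_algebra.
From mathcomp Require Import all_classical all_reals all_analysis.
From mathcomp Require Import complex.
From mathcomp Require Import ring lra.
From mathcomp Require Import cyclic.
Set Implicit Arguments. Unset Strict Implicit. Unset Printing Implicit Defensive.
Import Order.TTheory GRing.Theory Num.Theory.
Import numFieldNormedType.Exports.
Local Open Scope ring_scope.

Lemma coprime_modinv s d : (0 < d)%N -> coprime s d -> exists t, (s * t = 1 %[mod d])%N.
Proof.
move=> d_gt0 cop; exists (s ^ (totient d).-1)%N.
by rewrite -expnS prednK ?totient_gt0 // Euler_exp_totient.
Qed.

Section PadicIntegers.
Variable p : nat.

Lemma zp_ext (x y : zp p) : (forall k, zres x k = zres y k) -> x = y.
Proof.
case: x => fx modx compx; case: y => fy mody compy /= exy.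
have efxy : fx = fy by apply: funext.
subst fy; by rewrite (Prop_irrelevance modx mody) (Prop_irrelevance compx compy).
Qed.

Lemma zres_mod_le (x : zp p) k l : (l <= k)%N -> (zres x k %% p ^ l = zres x l)%N.
Proof.
elim: k => [|k IHk]; first by rewrite leqn0 => /eqP ->; rewrite zres_mod.
rewrite leq_eqVlt ltnS => /orP[/eqP -> | lk]; first by rewrite zres_mod.
by rewrite -IHk // -(zres_compat x k) modn_dvdm // dvdn_exp2l.
Qed.

Lemma zcong0 (x y : zp p) : zcong 0 x y.
Proof. by rewrite /zcong -(zres_mod x 0) -(zres_mod y 0) expn0 !modn1. Qed.

Lemma zcong_le k l (x y : zp p) : (l <= k)%N -> zcong k x y -> zcong l x y.
Proof. by move=> lk /eqP exy; rewrite /zcong -!(zres_mod_le _ lk) exy. Qed.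

Lemma zcong_sym k (x y : zp p) : zcong k x y = zcong k y x.
Proof. exact: eq_sym. Qed.

Lemma zmul_nat r s : zmul (zp_of_nat p r) (zp_of_nat p s) = zp_of_nat p (r * s).
Proof. by apply: zp_ext => k /=; rewrite modnMm. Qed.

Lemma zmul1 (x : zp p) : zmul (zp_of_nat p 1) x = x.
Proof. by apply: zp_ext => k /=; rewrite modnMml mul1n zres_mod. Qed.

Lemma zcong_mul k (x y x' y' : zp p) :
  zcong k x x' -> zcong k y y' -> zcong k (zmul x y) (zmul x' y').
Proof. by rewrite /zcong /= => /eqP -> /eqP ->. Qed.

Lemma zcong_modn k N r : (k <= N)%N ->
  zcong k (zp_of_nat p (r %% p ^ N)) (zp_of_nat p r).
Proof. by move=> kN; rewrite /zcong /= modn_dvdm // dvdn_exp2l. Qed.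

Lemma zcong_zres k N (x : zp p) : (k <= N)%N -> zcong k (zp_of_nat p (zres x N)) x.
Proof. by move=> kN; rewrite /zcong /= zres_mod_le. Qed.

Lemma zunit_nat r : zunit (zp_of_nat p r) = (r %% p != 0)%N.
Proof. by rewrite /zunit /= expn1. Qed.

Lemma zunit1 : (1 < p)%N -> zunit (zp_of_nat p 1).
Proof. by move=> p_gt1; rewrite zunit_nat modn_small. Qed.

Lemma zunitE (x : zp p) k : (0 < k)%N -> zunit x = ~~ (p %| zres x k)%N.
Proof. by move=> k_gt0; rewrite /zunit /dvdn -[X in (_ %% X)%N]expn1 zres_mod_le. Qed.

Lemma zunit_mul (x y : zp p) : prime p -> zunit x -> zunit y -> zunit (zmul x y).
Proof.
move=> p_prime ux uy; rewrite /zunit /= expn1 -/(dvdn p _).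
by rewrite Euclid_dvdM // negb_or -!(zunitE _ (ltn0Sn 0)) ux uy.
Qed.

Lemma zcong_valuation (x y : zp p) :
  (forall k, zcong k x y) \/ exists j, forall k, zcong k x y = (k <= j)%N.
Proof.
case: (pselect (exists k, ~~ zcong k x y)) => [ncong|allcong]; last first.
  by left=> k; apply/negPn/negP => nk; apply: allcong; exists k.
right; case: (ex_minnP ncong) => [[|j]]; first by rewrite zcong0.
move=> nj minj; exists j => k; case: leqP => [kj|jk].
  by apply/negPn/negP => /minj; rewrite ltn_geF // ltnS.
by apply: contraNF nj => /(zcong_le jk).
Qed.

Lemma zdist_val (R : realType) (x y : zp p) j :
  (forall k, zcong k x y = (k <= j)%N) -> zdist R x y = (p%:R : R[i]) ^- j.
Proof.
move=> val_xy; have ncong : exists k, ~~ zcong k x y by exists j.+1; rewrite val_xy ltnn.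
rewrite /zdist; case: pselect => // ncong1; rewrite /zval_diff; case: pselect => // ncong2.
case: ex_minnP => k; rewrite val_xy -ltnNge => jk /(_ j.+1).
by rewrite val_xy ltnn => /(_ isT) kj; rewrite (@anti_leq k j.+1) ?jk ?kj.
Qed.

Lemma zdist_eq0 (R : realType) (x y : zp p) : (forall k, zcong k x y) -> zdist R x y = 0.
Proof. by move=> allcong; rewrite /zdist; case: pselect => // -[k /negP[]]. Qed.

End PadicIntegers.

Lemma card_residue_class n d q c : n = (d * q)%N -> (c < d)%N ->
  (\sum_(r < n | r %% d == c) 1 = q)%N.
Proof.
move=> -> cd; rewrite -(big_mkord (fun r => r %% d == c)%N (fun _ => 1%N)).
elim: q => [|q IHq]; first by rewrite muln0 big_geq.
rewrite mulnS addnC (big_cat_nat (leq0n (d * q)%N) (leq_addr d (d * q)%N)) /= IHq.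
rewrite -{1}(add0n (d * q)%N) big_addn addKn sum1_count /index_iota subn0.
rewrite (@eq_in_count _ _ (pred1 c)) => [|r]; last first.
  by rewrite mem_iota add0n /= addnC mulnC modnMDl => /modn_small ->.
by rewrite count_uniq_mem ?iota_uniq // mem_iota cd addn1.
Qed.

Lemma sum_residue_class1 (F : pzSemiRingType) p N l c : (l <= N)%N -> (c < p ^ l)%N ->
  \sum_(r < p ^ N | (r %% p ^ l == c)%N) (1 : F) = (p ^ (N - l))%:R.
Proof.
move=> lN cl; rewrite [LHS](_ : _ = (\sum_(r < p ^ N | (r %% p ^ l == c)%N) 1)%N%:R).
  by rewrite (@card_residue_class _ (p ^ l) (p ^ (N - l))) // -expnD subnKC.
by rewrite natr_sum.
Qed.

Lemma sum_units1 (F : pzSemiRingType) p N : (0 < p)%N -> (0 < N)%N ->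
  \sum_(r < p ^ N | (r %% p != 0)%N) (1 : F) = (p ^ N - p ^ N.-1)%:R.
Proof.
move=> p_gt0 N_gt0; rewrite [LHS](_ : _ = (\sum_(r < p ^ N | (r %% p != 0)%N) 1)%N%:R).
  2: by rewrite natr_sum.
congr _%:R; have total : (\sum_(r < p ^ N) 1 = p ^ N)%N by rewrite sum1_card card_ord.
move: total; rewrite (bigID (fun r : 'I_(p ^ N) => (r %% p == 0)%N)) /=.
rewrite (@card_residue_class _ p (p ^ N.-1)) -?expnS ?(prednK N_gt0) //.
by move=> /(congr1 (subn^~ (p ^ N.-1)%N)); rewrite addKn.
Qed.

Lemma sum_units_expVN (F : numFieldType) p N : (0 < p)%N -> (0 < N)%N ->
  \sum_(r < p ^ N | (r %% p != 0)%N) (p%:R : F) ^- N = 1 - p%:R^-1.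
Proof.
move=> p_gt0 N_gt0; have pF_neq0 : (p%:R : F) != 0 by rewrite pnatr_eq0 -lt0n.
rewrite (eq_bigr (fun _ => 1 * p%:R ^- N)) => [|r _]; last by rewrite mul1r.
rewrite -mulr_suml sum_units1 // natrB ?leq_pexp2l ?leq_pred // !natrX.
move: N_gt0; case: N => // N _ /=.
by rewrite exprS; field; rewrite pF_neq0 expf_neq0.
Qed.

(* Since |y^2 - 1| >= 3/2 |y - 1| when |y - 1| < 1/2, the distances
   |z^(2^j) - 1| would grow linearly in j if z were not 1. *)
Lemma powers2_near1_eq1 (R : realType) (z : R[i]) :
  (forall j, `|z ^+ (2 ^ j) - 1| < ((2^-1 : R)%:C)%C) -> z = 1.
Proof.
move=> near1; pose d j := Normc.normc (z ^+ (2 ^ j) - 1).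
have d_lt j : d j < 2^-1 by rewrite -ltcR; exact: near1.
have d_ge0 j : 0 <= d j.
  by rewrite -lecR; have := normr_ge0 (z ^+ (2 ^ j) - 1); rewrite rmorph0.
have d_sqr j : 3 * d j <= 2 * d j.+1.
  rewrite /d expnS mulnC exprM; set y := z ^+ (2 ^ j).
  have -> : y ^+ 2 - 1 = (y - 1) * (y + 1) by ring.
  have y1 : 2 <= Normc.normc (y + 1) + Normc.normc (y - 1).
    rewrite -(normcN (y - 1)); apply: le_trans (le_normcD _ _).
    have -> : y + 1 + - (y - 1) = 1 *+ 2 by rewrite mulr2n; ring.
    by rewrite normcMn Normc.normc1.
  rewrite Normc.normcM; have := d_lt j; have := d_ge0 j; rewrite /d -/y; nra.
have d_lin j : j%:R * d 0 + 2 * d 0 <= 2 * d j.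
  elim: j => [|j IHj]; first by rewrite mul0r add0r.
  have := d_sqr j; have : 0 <= j%:R * d 0 by rewrite mulr_ge0.
  rewrite -natr1 mulrDl mul1r; lra.
apply/eqP; rewrite -subr_eq0; apply/eqP/Normc.eq0_normc.
apply/eqP; rewrite -[z - 1]expr1 -(expn0 2) -/(d 0) eq_le d_ge0 andbT leNgt.
apply/negP => d0_gt0; set j := Num.bound (d 0)^-1.
have d0V_ge0 : 0 <= (d 0)^-1 by rewrite invr_ge0 ltW.
have := archi_boundP d0V_ge0; rewrite -/j.
rewrite -(ltr_pM2r d0_gt0) mulVf ?gt_eqF //.
have := d_lin j; have := d_lt j; lra.
Qed.

Section Shells.
Variables (R : realType) (p : nat).
Hypothesis p_gt1 : (1 < p)%N.
Let p_gt0 : (0 < p)%N. Proof. exact: ltnW. Qed.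

Lemma zres_Eemb (x : Ept p) k : zres (Eemb x) k = (p ^ x.1 * zres x.2 k %% p ^ k)%N.
Proof. by rewrite /= modnMml. Qed.

Lemma zres_Eemb_small (x : Ept p) k : (k <= x.1)%N -> zres (Eemb x) k = 0%N.
Proof. by move=> kx; rewrite zres_Eemb; apply/eqP/dvdn_mulr; rewrite dvdn_exp2l. Qed.

Lemma zcong_Eemb_same a (u v : zp p) k :
  zcong k (Eemb (a, u)) (Eemb (a, v)) = zcong (k - a) u v.
Proof.
case: (leqP k a) => [ka|ak].
  by move: (ka); rewrite -subn_eq0 => /eqP ->; rewrite zcong0 /zcong !zres_Eemb_small.
rewrite -(subnK (ltnW ak)) addnK /zcong !zres_Eemb /= expnD [(p ^ _ * p ^ a)%N]mulnC.
rewrite -!muln_modr ?expn_gt0 ?p_gt0 // eqn_pmul2l ?expn_gt0 ?p_gt0 //.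
by rewrite !zres_mod_le ?leq_addr.
Qed.

Lemma zcong_Eemb_lt a i (u v : zp p) k : (a < i)%N -> zunit u ->
  zcong k (Eemb (a, u)) (Eemb (i, v)) = (k <= a)%N.
Proof.
move=> ai uu; case: (leqP k a) => [ka|ak].
  by rewrite /zcong !zres_Eemb_small // (leq_trans ka (ltnW ai)).
apply: contraTF uu => /(zcong_le ak).
rewrite /zcong (@zres_Eemb_small (i, v)) // zres_Eemb /= expnSr.
rewrite -muln_modr ?expn_gt0 ?p_gt0 // muln_eq0 expn_eq0 (gtn_eqF p_gt0) /= /zunit.
by rewrite -[X in (_ %% X)%N]expn1 zres_mod_le // => ->.
Qed.

Lemma zdist_Eemb_same a (u v : zp p) :
  zdist R (Eemb (a, u)) (Eemb (a, v)) = (p%:R : R[i]) ^- a * zdist R u v.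
Proof.
case: (zcong_valuation u v) => [allcong|[j val_uv]].
  by rewrite !zdist_eq0 ?mulr0 // => k; rewrite zcong_Eemb_same.
rewrite (zdist_val R val_uv) (@zdist_val _ R _ _ (j + a)) -?invfM -?exprD 1?addnC //.
by move=> k; rewrite zcong_Eemb_same val_uv leq_subLR addnC.
Qed.

Lemma zdist_Eemb_diff a i (u v : zp p) : a != i -> zunit u -> zunit v ->
  zdist R (Eemb (a, u)) (Eemb (i, v)) = (p%:R : R[i]) ^- minn a i.
Proof.
move=> ai uu uv; apply: zdist_val => k.
case: (ltngtP a i) ai => // [ai|ia] _; first by rewrite zcong_Eemb_lt // (minn_idPl (ltnW ai)).
by rewrite zcong_sym zcong_Eemb_lt // (minn_idPr (ltnW ia)).
Qed.

End Shells.

Section UnitCharacters.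
Variables (R : realType) (p : nat) (chi : zp p -> R[i]).
Hypothesis p_prime : prime p.
Hypothesis chi_mul : forall u v, zunit u -> zunit v -> chi (zmul u v) = chi u * chi v.
Hypothesis chi_neq0 : forall u, zunit u -> chi u != 0.
Let p_gt1 : (1 < p)%N. Proof. exact: prime_gt1. Qed.
Let p_gt0 : (0 < p)%N. Proof. exact: prime_gt0. Qed.
Local Notation zr r := (zp_of_nat p r%N).
Let pexpn_gt0 k : (0 < p ^ k)%N. Proof. by rewrite expn_gt0 p_gt0. Qed.

Lemma chi1 : chi (zr 1) = 1.
Proof.
have u1 := zunit1 p_gt1.
by apply: (mulIf (chi_neq0 u1)); rewrite mul1r -chi_mul // zmul1.
Qed.

Lemma trivial_on_zcong n (v v' : zp p) :
  trivial_on chi n -> zunit v -> zunit v' -> zcong n v v' -> chi v = chi v'.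
Proof.
case: n => [|n] triv uv uv' vv'; first by rewrite !triv ?zcong0.
have p_dvd : (p %| p ^ n.+1)%N by rewrite dvdn_exp.
have cop : coprime (zres v' n.+1) (p ^ n.+1).
  by rewrite coprime_pexpr // coprime_sym prime_coprime // -zunitE.
have [t v't1] := coprime_modinv (pexpn_gt0 n.+1) cop.
have ut : zunit (zr t).
  move: v't1 => /(congr1 (modn^~ p)) /=; rewrite !(modn_dvdm _ p_dvd) (modn_small p_gt1).
  by rewrite zunit_nat -modnMmr; apply: contra_eqN => /eqP ->; rewrite muln0 mod0n.
have chi_t (y : zp p) : zunit y -> zcong n.+1 y v' -> chi y * chi (zr t) = 1.
  move=> uy /eqP yv'; rewrite -chi_mul // triv ?zunit_mul //.
  by rewrite /zcong /= yv' modnMmr v't1.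
by apply: (mulIf (chi_neq0 ut)); rewrite !chi_t // /zcong.
Qed.

Lemma trivial_on_near1 k :
  (forall y, zunit y -> zcong k y (zr 1) -> `|chi y - 1| < ((2^-1 : R)%:C)%C) ->
  trivial_on chi k.
Proof.
move=> near1 u uu uk; apply: powers2_near1_eq1 => j.
have [y [uy yk <-]] : exists y, [/\ zunit y, zcong k y (zr 1) & chi y = chi u ^+ (2 ^ j)].
  elim: j => [|j [y [uy yk chi_y]]]; first by exists u.
  exists (zmul y y); split; [exact: zunit_mul | | ].
    by rewrite -(zmul1 (zr 1)); apply: zcong_mul.
  by rewrite chi_mul // chi_y expnS mulnC exprM expr2.
exact: near1.
Qed.

Lemma conductor_exists k : trivial_on chi k -> exists n, conductor chi n.
Proof.
move=> triv_k; have triv_k1 : trivial_on chi k.+1.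
  by move=> u uu uk; apply: triv_k => //; apply: zcong_le uk.
have ex_triv : exists n, (0 < n)%N && `[< trivial_on chi n >].
  by exists k.+1; apply/andP; split; last exact/asboolP.
case: (ex_minnP ex_triv) => n /andP[n_gt0 /asboolP triv_n] min_n.
exists n; split => // l /andP[l_gt0 ln] triv_l.
by have := min_n l; rewrite l_gt0 ltn_geF // => /(_ (asboolT triv_l)).
Qed.

Lemma sum_chi_stable_eq0 n N (P : pred nat) (v : zp p) :
  trivial_on chi n -> (n <= N)%N -> (0 < N)%N -> zunit v -> chi v != 1 ->
  (forall r, P r -> (r %% p != 0)%N) -> (forall r, P (r * zres v N %% p ^ N)%N = P r) ->
  \sum_(r < p ^ N | P r) chi (zr r) = 0.
Proof.
move=> triv nN N_gt0 uv chi_v1 P_unit P_stable; set s := zres v N.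
have us : zunit (zr s) by rewrite zunit_nat -/(dvdn p s) (zunitE _ N_gt0) in uv *.
have chi_s : chi (zr s) = chi v by apply: (trivial_on_zcong triv) => //; apply: zcong_zres.
have cop : coprime s (p ^ N) by rewrite coprime_pexpr // coprime_sym prime_coprime.
have [t st1] := coprime_modinv (pexpn_gt0 N) cop.
pose h (r : 'I_(p ^ N)) : 'I_(p ^ N) := Ordinal (ltn_pmod (r * s) (pexpn_gt0 N)).
have h_inj : injective h.
  move=> r1 r2 /(congr1 (fun r : 'I_(p ^ N) => val r * t %% p ^ N)%N) /=.
  rewrite !modnMml -!mulnA -!(modnMmr _ (s * t)) st1 !modnMmr !muln1.
  by rewrite !modn_small //; apply: val_inj.
have chi_h (r : 'I_(p ^ N)) : P r -> chi (zr (h r)) = chi (zr r) * chi v.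
  move=> Pr; have ur : zunit (zr r) by rewrite zunit_nat P_unit.
  rewrite -chi_s -chi_mul // zmul_nat; apply: (trivial_on_zcong triv).
  - by rewrite zunit_nat P_unit ?P_stable.
  - by rewrite -zmul_nat zunit_mul.
  - exact: zcong_modn.
have E : \sum_(r < p ^ N | P r) chi (zr r) = (\sum_(r < p ^ N | P r) chi (zr r)) * chi v.
  rewrite {1}(reindex_inj h_inj) mulr_suml.
  by apply: eq_big => r /=; rewrite P_stable // => /chi_h.
move/eqP: E; rewrite -subr_eq0 -{1}[\sum_(_ < _ | _) _]mulr1 -mulrBr.
by rewrite mulf_eq0 subr_eq0 [1 == _]eq_sym (negbTE chi_v1) orbF => /eqP.
Qed.

Lemma sum_units_chi_eq0 n N : ~ char_trivial chi -> trivial_on chi n ->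
  (n <= N)%N -> (0 < N)%N -> \sum_(r < p ^ N | (r %% p != 0)%N) chi (zr r) = 0.
Proof.
move=> ntriv triv nN N_gt0.
have [v [uv chi_v1]] : exists v, zunit v /\ chi v != 1.
  case: (pselect (exists v, zunit v /\ chi v != 1)) => // nex; case: ntriv => v uv.
  by apply/eqP/contraT => chi_v1; case: nex; exists v.
apply: (sum_chi_stable_eq0 (P := fun r => (r %% p != 0)%N) triv nN N_gt0 uv chi_v1) => // r.
have p_ndvd_v : ~~ (p %| zres v N)%N by rewrite -zunitE.
rewrite (modn_dvdm _ (dvdn_exp N_gt0 (dvdnn p))) -!/(dvdn p _) Euclid_dvdM //.
by rewrite (negbTE p_ndvd_v) orbF.
Qed.

Lemma sum_chi_layer n N l (u : zp p) : trivial_on chi n -> (n <= N)%N ->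
  (0 < l)%N -> (l <= N)%N -> ~ trivial_on chi l -> zunit u ->
  \sum_(r < p ^ N | (r %% p != 0)%N) (zcong l u (zr r))%:R * (chi (zr r) - chi u)
  = - (chi u * (p ^ (N - l))%:R).
Proof.
move=> triv nN l_gt0 lN ntriv_l uu; have N_gt0 := leq_trans l_gt0 lN.
set c := zres u l; have c_lt : (c < p ^ l)%N by rewrite /c -(zres_mod u l) ltn_pmod.
have class_unit r : (r %% p ^ l == c)%N -> (r %% p != 0)%N.
  move=> /eqP rc; rewrite -(modn_dvdm r (dvdn_exp l_gt0 (dvdnn p))) rc.
  by rewrite -/(dvdn p c) -(zunitE _ l_gt0).
have -> : \sum_(r < p ^ N | (r %% p != 0)%N) (zcong l u (zr r))%:R * (chi (zr r) - chi u)
    = \sum_(r < p ^ N | (r %% p ^ l == c)%N) (chi (zr r) - chi u).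
  rewrite big_mkcond [RHS]big_mkcond; apply: eq_bigr => r _.
  rewrite /zcong /= -/c [c == _]eq_sym; case rc: (r %% p ^ l == c)%N.
    by rewrite class_unit // mul1r.
  by rewrite mul0r; case: ifP.
have [v [uv vl chi_v1]] : exists v, [/\ zunit v, zcong l v (zr 1) & chi v != 1].
  case: (pselect (exists v, [/\ zunit v, zcong l v (zr 1) & chi v != 1])) => // nex.
  case: ntriv_l => v uv vl; apply/eqP/contraT => chi_v1; case: nex; by exists v.
rewrite sumrB (sum_chi_stable_eq0 (P := fun r => (r %% p ^ l == c)%N) triv nN N_gt0 uv chi_v1) //.
  rewrite sub0r (eq_bigr (fun _ => chi u * 1)) => [|r _]; last by rewrite mulr1.
  by rewrite -mulr_sumr sum_residue_class1.
move=> r; rewrite (modn_dvdm _ (dvdn_exp2l p lN)) -modnMmr (zres_mod_le _ lN).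
by rewrite (eqP vl) modnMmr muln1.
Qed.

Lemma layer_cake n (u v : zp p) : trivial_on chi n -> zunit u -> zunit v ->
  ((zdist R u v ^+ 2)^-1 - 1) * (chi v - chi u) =
  \sum_(0 <= k < n.-1) (((p%:R : R[i]) ^+ 2) ^+ k.+1 - (p%:R ^+ 2) ^+ k)
                         * (zcong k.+1 u v)%:R * (chi v - chi u).
Proof.
move=> triv uu uv; rewrite -mulr_suml.
have chi_uv : zcong n u v -> chi v = chi u.
  by move=> uv_n; apply: (trivial_on_zcong triv uv uu); rewrite zcong_sym.
case: (zcong_valuation u v) => [allcong|[j val_uv]].
  by rewrite chi_uv // subrr !mulr0.
case: (leqP n j) => [nj|jn]; first by rewrite chi_uv ?val_uv // subrr !mulr0.
congr (_ * _); rewrite (zdist_val R val_uv) -exprVn invrK -exprM mulnC exprM.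
have jn' : (j <= n.-1)%N by rewrite -ltnS prednK // (leq_ltn_trans _ jn).
rewrite -[_ - 1](@telescope_sumr _ 0 j (fun k => (p%:R ^+ 2) ^+ k)) ?expr0 //.
rewrite (big_nat_widen _ _ _ _ _ jn').
rewrite big_mkcond; apply: eq_bigr => k _; rewrite val_uv /=.
by case: (k < j)%N; rewrite ?mulr1 ?mulr0.
Qed.

Lemma sum_diag_conductor n N (u : zp p) : conductor chi n -> (n <= N)%N -> zunit u ->
  \sum_(r < p ^ N | (r %% p != 0)%N)
     ((zdist R u (zr r) ^+ 2)^-1 - 1) * (chi (zr r) - chi u) * p%:R ^- N
  = - chi u * \sum_(0 <= k < n.-1)
       (((p%:R : R[i]) ^+ 2) ^+ k.+1 - (p%:R ^+ 2) ^+ k) * p%:R ^- k.+1.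
Proof.
case=> n_gt0 triv min_n nN uu.
under eq_bigr => r ur do rewrite (layer_cake triv uu) ?zunit_nat // mulr_suml.
rewrite exchange_big mulr_sumr; apply: eq_big_nat => k /andP[_ kn].
have kN : (k.+1 <= N)%N by apply: leq_trans nN; rewrite -(prednK n_gt0) ltnS ltnW.
rewrite -mulr_suml; under eq_bigr do rewrite -mulrA; rewrite -mulr_sumr.
rewrite (sum_chi_layer triv nN) //; last by apply: min_n; rewrite ltn0Sn /= -(prednK n_gt0) ltnS.
have p_neq0 : (p%:R : R[i]) ^+ k.+1 != 0 by rewrite expf_neq0 // pnatr_eq0 -lt0n.
rewrite natrX -{2}(subnK kN) exprD invfM; field.
by rewrite p_neq0 expf_neq0 // pnatr_eq0 -lt0n.
Qed.
End UnitCharacters.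

Lemma big_ord_addn_mod (T : Type) (idx : T) (op : Monoid.com_law idx) m b (G : nat -> T) :
  (0 < m)%N -> \big[op/idx]_(i < m) G ((i + b) %% m)%N = \big[op/idx]_(i < m) G i.
Proof.
move=> m_gt0; pose h (i : 'I_m) : 'I_m := Ordinal (ltn_pmod (i + b) m_gt0).
have h_inj : injective h.
  move=> i j /(congr1 val) /= /eqP; rewrite eqn_modDr !modn_small // => /eqP.
  exact: val_inj.
by rewrite [RHS](reindex_inj h_inj).
Qed.

Lemma sum_exprE (F : fieldType) (x : F) n : x != 1 ->
  \sum_(i < n) x ^+ i = (x ^+ n - 1) / (x - 1).
Proof. by move=> x1; rewrite subrX1 [_ * \sum_(_ < _) _]mulrC mulfK // subr_eq0. Qed.

Section ShellKernel.
Variables (F : numFieldType) (p m : nat).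
Hypotheses (p_gt1 : (1 < p)%N) (m_gt0 : (0 < m)%N).
Local Notation pF := (p%:R : F).

(* The periodisation sum_(j in Z) p^-|d + j m| of p^-|d|, for 0 <= d <= m. *)
Definition shell_kernel d : F := (pF ^+ (m - d) + pF ^+ d) / (pF ^+ m - 1).

Definition shell_kernel_hat (w : F) : F := \sum_(d < m) shell_kernel d * w ^+ d.

Let pF_neq0 : pF != 0. Proof. by rewrite pnatr_eq0 -lt0n ltnW. Qed.
Let pFX_neq0 k : pF ^+ k != 0. Proof. exact: expf_neq0. Qed.
Let pFm1_neq0 : pF ^+ m - 1 != 0.
Proof. by rewrite subr_eq0 -natrX pnatr_eq1 -(expn0 p) eqn_exp2l // -lt0n. Qed.

Lemma shell_kernelE d : (d <= m)%N ->
  shell_kernel d = pF ^- d + (pF ^+ m - 1)^-1 * (pF ^+ d + pF ^- d).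
Proof.
move=> dm; rewrite /shell_kernel; move: pFm1_neq0.
set e := (m - d)%N; have -> : m = (e + d)%N by rewrite subnK.
by rewrite exprD => pm1; field; rewrite pm1 !pFX_neq0.
Qed.

Lemma shell_kernel_sym d : (d <= m)%N -> shell_kernel (m - d) = shell_kernel d.
Proof. by move=> dm; rewrite /shell_kernel subKn // addrC. Qed.

Lemma shell_kernel_offdiag a i : (a < m)%N -> (i < m)%N -> a != i ->
  pF ^- a * pF ^- i / (pF ^- minn a i) ^+ 2
    + (pF ^+ m - 1)^-1 * (pF ^- a / pF ^- i + pF ^- i / pF ^- a)
  = shell_kernel ((i + m - a) %% m).
Proof.
move=> am im; case: ltngtP => // [ai|ia] _.
  have [d id] : exists d, i = (a + d)%N by exists (i - a)%N; rewrite subnKC // ltnW.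
  subst i.
  have dm : (d < m)%N := leq_ltn_trans (leq_addl a d) im.
  rewrite -addnA addKn modnDr modn_small // (shell_kernelE (ltnW dm)).
  by rewrite exprD; field; rewrite pFm1_neq0 !pFX_neq0.
have [d ad] : exists d, a = (i + d)%N by exists (a - i)%N; rewrite subnKC // ltnW.
subst a.
have d_gt0 : (0 < d)%N by rewrite -(ltn_add2l i) addn0.
have dm : (d <= m)%N := ltnW (leq_ltn_trans (leq_addl i d) am).
rewrite subnDl modn_small ?ltn_subrL ?d_gt0 //.
rewrite shell_kernel_sym // shell_kernelE //.
by rewrite exprD; field; rewrite pFm1_neq0 !pFX_neq0.
Qed.

Lemma shell_kernel_diag a (z : F) :
  pF ^- a * pF ^- a / (pF ^- a * z) ^+ 2
    + (pF ^+ m - 1)^-1 * (pF ^- a / pF ^- a + pF ^- a / pF ^- a)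
  = shell_kernel 0 + (z ^+ 2)^-1 - 1.
Proof.
have pa_neq0 : pF ^- a != 0 by rewrite invr_eq0.
rewrite exprMn invfM mulrA -expr2 mulfV ?expf_neq0 // mul1r divff // shell_kernelE //.
rewrite !expr0 invr1; set K := (_ ^+ m - 1)^-1; set Z := z ^- 2; ring.
Qed.

Lemma sum_shell_kernel_rot (w : F) a : w ^+ m = 1 -> (a < m)%N ->
  \sum_(i < m) shell_kernel ((i + m - a) %% m) * w ^+ i = w ^+ a * shell_kernel_hat w.
Proof.
move=> wm am; have wi (i : 'I_m) : w ^+ i = w ^+ a * w ^+ ((i + (m - a)) %% m).
  by rewrite (expr_mod _ wm) -exprD addnCA subnKC ?(ltnW am) // exprD wm mulr1.
under eq_bigr => i _ do rewrite wi -(addnBA _ (ltnW am)) mulrCA.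
by rewrite -mulr_sumr (@big_ord_addn_mod _ _ _ m (m - a) (fun d => shell_kernel d * w ^+ d)).
Qed.

Lemma shell_kernel_hatE (w : F) : w ^+ m = 1 -> pF * w != 1 -> w != pF ->
  shell_kernel_hat w = (pF * w - 1)^-1 + pF / (pF - w).
Proof.
move=> wm pw1 wp; have wp1 : w / pF != 1.
  by apply: contra wp => /eqP wp1; rewrite -(divfK pF_neq0 w) wp1 mul1r.
have term (d : 'I_m) : shell_kernel d * w ^+ d
    = (pF ^+ m * (w / pF) ^+ d + (pF * w) ^+ d) / (pF ^+ m - 1).
  rewrite /shell_kernel expfB // !exprMn exprVn; field; by rewrite pFm1_neq0 pFX_neq0.
rewrite /shell_kernel_hat (eq_bigr _ (fun d _ => term d)) -mulr_suml big_split /=.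
rewrite -mulr_sumr !sum_exprE // !exprMn exprVn wm mul1r mulr1.
have pw_neq0 : pF * w - 1 != 0 by rewrite subr_eq0.
have p_w_neq0 : pF - w != 0 by rewrite subr_eq0 eq_sym.
have w_p_neq0 : w + -1 * pF != 0 by rewrite mulN1r subr_eq0.
by field; rewrite p_w_neq0 pw_neq0 pFm1_neq0 pF_neq0 w_p_neq0 pFX_neq0.
Qed.

End ShellKernel.

Arguments shell_kernel {F} p m d.

Section Limits.
Local Open Scope classical_set_scope.

Lemma Clim_eventually_const (R : realType) (u : nat -> R[i]) S N0 :
  (forall N, (N0 <= N)%N -> u N = S) -> Clim u = S.
Proof.
move=> uS; rewrite /Clim.
have reS : (fun n => complex.Re (u n)) @ \oo --> complex.Re S.
  by apply: cvg_near_cst; exists N0 => // N /= /uS ->.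
have imS : (fun n => complex.Im (u n)) @ \oo --> complex.Im S.
  by apply: cvg_near_cst; exists N0 => // N /= /uS ->.
by rewrite (cvg_lim _ reS) // (cvg_lim _ imS) //; case: S {uS reS imS}.
Qed.

End Limits.

Section Eigenvalues.
Variables (R : realType) (p m : nat).
Hypotheses (p_gt1 : (1 < p)%N) (m_gt0 : (0 < m)%N).
Local Notation pC := (p%:R : R[i]).
Let pC_neq0 : pC != 0. Proof. by rewrite pnatr_eq0 -lt0n ltnW. Qed.
Let pC_neq1 : pC != 1. Proof. by rewrite pnatr_eq1 gtn_eqF. Qed.
Let pC1_neq0 : pC - 1 != 0. Proof. by rewrite subr_eq0 pC_neq1. Qed.
Let pC2_neq0 : pC ^+ 2 - 1 != 0.
Proof.
have -> : pC ^+ 2 - 1 = (pC - 1) * (pC + 1) by ring.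
by rewrite mulf_neq0 // -(natrD _ p 1) pnatr_eq0 addn1.
Qed.

Lemma shell_kernel_hat1 : shell_kernel_hat p m (1 : R[i]) = (pC + 1) / (pC - 1).
Proof. by rewrite shell_kernel_hatE ?expr1n ?mulr1 // 1?eq_sym //; field. Qed.

Lemma ramified_eigenvalueE n : (0 < n)%N ->
  cp R p * ((1 - pC^-1) * shell_kernel_hat p m 1
            + \sum_(0 <= k < n.-1) ((pC ^+ 2) ^+ k.+1 - (pC ^+ 2) ^+ k) * pC ^- k.+1)
  = ((p - 1) * p ^ n.-1)%:R.
Proof.
move=> n_gt0; rewrite shell_kernel_hat1.
rewrite (eq_big_nat _ _ (F2 := fun k => (pC - pC^-1) * pC ^+ k)) => [|k _]; last first.
  rewrite [(pC ^+ 2) ^+ k.+1]exprS (exprAC pC 2 k) [pC ^+ k.+1]exprS.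
  by field; rewrite pC_neq0 expf_neq0.
rewrite -mulr_sumr big_mkord sum_exprE // natrM natrB ?(ltnW p_gt1) // natrX.
by rewrite /cp; set X := pC ^+ n.-1; field; rewrite pC1_neq0 pC_neq0 pC2_neq0.
Qed.

Lemma unramified_eigenvalueE (w : R[i]) : w ^+ m = 1 ->
  cp R p * (1 - pC^-1) * (shell_kernel_hat p m 1 - shell_kernel_hat p m w)
  = pC * (pC - 1) * (2 - w - Num.conj w) / (pC ^+ 2 - pC * (w + Num.conj w) + 1).
Proof.
move=> wm.
have nw : `|w| = 1 by apply/eqP; rewrite -(pexpr_eq1 m_gt0) ?normr_ge0 // -normrX wm normr1.
have w_neq0 : w != 0 by rewrite -normr_eq0 nw oner_eq0.
have cw : Num.conj w = w^-1 by rewrite invC_norm nw expr1n invr1 mul1r.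
have pw1 : pC * w != 1.
  by apply: contra_neq pC_neq1 => /(congr1 Num.norm); rewrite normrM normr_nat nw mulr1 normr1.
have wp : w != pC by apply: contra_neq pC_neq1 => wp; move: nw; rewrite wp normr_nat.
have p_w : pC - w != 0 by rewrite subr_eq0 eq_sym.
have pw_1 : pC * w - 1 != 0 by rewrite subr_eq0.
have den : pC ^+ 2 * w - pC * (w * w + 1) + w != 0.
  have -> : pC ^+ 2 * w - pC * (w * w + 1) + w = (pC * w - 1) * (pC - w) by ring.
  exact: mulf_neq0.
rewrite shell_kernel_hat1 shell_kernel_hatE // cw /cp.
by field; rewrite w_neq0 den p_w pw_1 pC1_neq0 pC_neq0 pC2_neq0.
Qed.

End Eigenvalues.

Section CharactersOfE.
Variables (R : realType) (p m : nat) (pi : Ept p -> R[i]).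
Hypotheses (p_prime : prime p) (m_gt0 : (0 < m)%N) (pi_char : Echaracter m pi).
Let p_gt1 : (1 < p)%N. Proof. exact: prime_gt1. Qed.
Local Notation zr r := (zp_of_nat p r%N).
Local Notation chi := (pihat pi).
Local Notation w := (pi (1 %% m, zr 1)%N).

Lemma pi_mul (x y : Ept p) : in_E m x -> in_E m y -> pi (Emul m x y) = pi x * pi y.
Proof. by case: pi_char => _ pi_mul _; apply: pi_mul. Qed.

Lemma pihat_mul (u v : zp p) : zunit u -> zunit v -> chi (zmul u v) = chi u * chi v.
Proof. by move=> uu uv; rewrite /pihat -pi_mul /in_E ?m_gt0 ?uu ?uv // /Emul /= mod0n. Qed.

Lemma pihat_neq0 (u : zp p) : zunit u -> chi u != 0.
Proof. by case: pi_char => pi_neq0 _ _ uu; apply: pi_neq0; rewrite /in_E m_gt0. Qed.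

Let chi1 : chi (zr 1) = 1 := chi1 p_prime pihat_mul pihat_neq0.

Lemma pi_shell i (v : zp p) : (i < m)%N -> zunit v -> pi (i, v) = w ^+ i * chi v.
Proof.
elim: i => [|i IHi] im uv; first by rewrite mul1r.
have m_gt1 : (1 < m)%N by apply: leq_ltn_trans im.
have u1 := zunit1 p_gt1.
rewrite exprS -mulrA -IHi ?(ltnW im) // -pi_mul /in_E ?ltn_pmod ?(ltnW im) ?u1 ?uv //.
by rewrite /Emul /= zmul1 (modn_small m_gt1) add1n modn_small.
Qed.

Lemma w_expm : w ^+ m = 1.
Proof.
have u1 := zunit1 p_gt1.
have wm1 : pi (m.-1, zr 1) = w ^+ m.-1 by rewrite pi_shell ?prednK // chi1 mulr1.
have : pi (Emul m (1 %% m, zr 1) (m.-1, zr 1))%N = 1.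
  by rewrite /Emul /= zmul1 modnDml add1n prednK // modnn.
by rewrite pi_mul ?/in_E ?ltn_pmod ?u1 ?prednK ?leqnn // wm1 -exprS prednK.
Qed.

Lemma pihat_conductor : exists n, conductor chi n.
Proof.
case: pi_char => _ _ /(_ (0, zr 1)%N) cont.
have in_E1 : in_E m (0, zr 1)%N by rewrite /in_E m_gt0 (zunit1 p_gt1).
have half_gt0 : (0 : R) < 2^-1 by rewrite invr_gt0 ltr0Sn.
have [k near1] := cont in_E1 _ half_gt0.
apply: (conductor_exists (k := k)); apply: (trivial_on_near1 p_prime pihat_mul) => y uy yk.
by rewrite -chi1; apply: near1; rewrite ?/in_E ?m_gt0.
Qed.

Local Notation integrand x := (fun z => Hker R m z x * (pi z - pi x)).

(* At v = u the inverse of zdist R u v = 0 is the junk value 0; the integrand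
   multiplies it by pi z - pi x = 0. *)
Lemma HkerE a i (u v : zp p) : (a < m)%N -> (i < m)%N -> zunit u -> zunit v ->
  Hker R m (i, v) (a, u)
  = shell_kernel p m ((i + m - a) %% m) + (i == a)%:R * ((zdist R u v ^+ 2)^-1 - 1).
Proof.
move=> am im uu uv; rewrite /Hker /Edist /Eabs /=; case: eqVneq => [->|ia].
  by rewrite zdist_Eemb_same // shell_kernel_diag // addKn modnn mul1r addrA.
rewrite zdist_Eemb_diff 1?eq_sym // shell_kernel_offdiag 1?eq_sym //.
by rewrite mul0r addr0.
Qed.

Lemma riemann_sum_decomp N a (u : zp p) : (0 < N)%N -> (a < m)%N -> zunit u ->
  riemann_sum m (integrand (a, u)) N
  = \sum_(i < m) shell_kernel p m ((i + m - a) %% m)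
        * (w ^+ i * \sum_(r < p ^ N | (r %% p != 0)%N) chi (zr r) * p%:R ^- N
           - pi (a, u) * (1 - p%:R^-1))
    + w ^+ a * \sum_(r < p ^ N | (r %% p != 0)%N)
        ((zdist R u (zr r) ^+ 2)^-1 - 1) * (chi (zr r) - chi u) * p%:R ^- N.
Proof.
move=> N_gt0 am uu; rewrite /riemann_sum.
have term (i : 'I_m) (r : 'I_(p ^ N)) : (r %% p != 0)%N ->
    Hker R m (i : nat, zr r) (a, u) * (pi (i : nat, zr r) - pi (a, u)) * p%:R ^- N
    = shell_kernel p m ((i + m - a) %% m)
        * (w ^+ i * (chi (zr r) * p%:R ^- N) - pi (a, u) * p%:R ^- N)
      + (i == a :> nat)%:R * (w ^+ a * (((zdist R u (zr r) ^+ 2)^-1 - 1)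
                                 * (chi (zr r) - chi u) * p%:R ^- N)).
  move=> ur; rewrite HkerE ?zunit_nat // pi_shell ?zunit_nat // (pi_shell am uu).
  by case: eqP => [->|_]; rewrite ?mul1r ?mul0r; ring.
under eq_bigr => i _ do rewrite (eq_bigr _ (term i)) big_split /= -!mulr_sumr sumrB -!mulr_sumr.
rewrite big_split /= (sum_units_expVN _ (prime_gt0 p_prime) N_gt0); congr (_ + _).
rewrite (bigD1 (Ordinal am)) //= eqxx mul1r [X in _ + X]big1 ?addr0 // => i.
by rewrite -val_eqE /= => /negPf ->; rewrite mul0r.
Qed.

Let sum_shell_kernel a : (a < m)%N ->
  \sum_(i < m) shell_kernel p m ((i + m - a) %% m) = shell_kernel_hat p m (1 : R[i]).
Proof.
move=> am; have := sum_shell_kernel_rot p m_gt0 (expr1n R[i] m) am.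
by rewrite expr1n mul1r => <-; apply: eq_bigr => i _; rewrite expr1n mulr1.
Qed.

Lemma Dop_pi_ramified n x : ~ char_trivial chi -> conductor chi n -> in_E m x ->
  Dop m pi x = ((p - 1) * p ^ n.-1)%:R * pi x.
Proof.
move=> ntriv cond; case: x => a u /andP[am uu]; have [n_gt0 triv _] := cond.
have RS N : (n <= N)%N -> riemann_sum m (integrand (a, u)) N
    = - pi (a, u) * ((1 - p%:R^-1) * shell_kernel_hat p m 1
        + \sum_(0 <= k < n.-1) ((p%:R ^+ 2) ^+ k.+1 - (p%:R ^+ 2) ^+ k) * p%:R ^- k.+1).
  move=> nN; have N_gt0 := leq_trans n_gt0 nN.
  rewrite riemann_sum_decomp // (sum_diag_conductor p_prime pihat_mul pihat_neq0 cond) //.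
  have chi_mean := sum_units_chi_eq0 p_prime pihat_mul pihat_neq0 ntriv triv nN N_gt0.
  under eq_bigr do rewrite -mulr_suml chi_mean mul0r mulr0 sub0r mulrN.
  by rewrite sumrN -mulr_suml sum_shell_kernel // (pi_shell am uu); ring.
rewrite /Dop /Eintegral (Clim_eventually_const RS) -(ramified_eigenvalueE R p_gt1 m_gt0 n_gt0).
ring.
Qed.

Lemma Dop_pi_unramified x : char_trivial chi -> in_E m x ->
  Dop m pi x = p%:R * (p%:R - 1) * (2 - w - Num.conj w)
                 / (p%:R ^+ 2 - p%:R * (w + Num.conj w) + 1) * pi x.
Proof.
move=> triv; case: x => a u /andP[am uu].
have pi_a : pi (a, u) = w ^+ a by rewrite pi_shell // triv // mulr1.
have RS N : (0 < N)%N -> riemann_sum m (integrand (a, u)) N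
    = (1 - p%:R^-1) * (w ^+ a * shell_kernel_hat p m w - w ^+ a * shell_kernel_hat p m 1).
  move=> N_gt0; rewrite riemann_sum_decomp // [X in _ + _ * X]big1 ?mulr0 ?addr0.
    2: by move=> r ur; rewrite !triv ?zunit_nat // subrr mulr0 mul0r.
  have units_measure : \sum_(r < p ^ N | (r %% p != 0)%N) chi (zr r) * p%:R ^- N = 1 - p%:R^-1.
    rewrite -(sum_units_expVN _ (prime_gt0 p_prime) N_gt0).
    by apply: eq_bigr => r ur; rewrite triv ?zunit_nat // mul1r.
  rewrite units_measure pi_a (eq_bigr (fun i : 'I_m => (1 - p%:R^-1)
      * (shell_kernel p m ((i + m - a) %% m) * w ^+ i)
      - (1 - p%:R^-1) * w ^+ a * shell_kernel p m ((i + m - a) %% m))) => [|i _]; last by ring.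
  by rewrite sumrB -!mulr_sumr sum_shell_kernel_rot ?w_expm // sum_shell_kernel //; ring.
rewrite /Dop /Eintegral (Clim_eventually_const RS) pi_a.
by rewrite -(unramified_eigenvalueE p_gt1 m_gt0 w_expm); ring.
Qed.

End CharactersOfE.

Theorem mainTheorem2 (R : realType) (p m : nat) (pi : Ept p -> R[i]) :
  prime p -> (0 < m)%N -> Echaracter m pi ->
  [/\ (exists lam : R[i], forall x, in_E m x -> Dop m pi x = lam * pi x),
      (forall n : nat, ~ char_trivial (pihat pi) -> conductor (pihat pi) n ->
         forall x, in_E m x -> Dop m pi x = ((p - 1) * p ^ n.-1)%:R * pi x) &
      (char_trivial (pihat pi) ->
         let w := pi (1 %% m, zp_of_nat p 1)%N in
         forall x, in_E m x ->
           Dop m pi x =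
             (p%:R * (p%:R - 1) * (2 - w - Num.conj w))
               / (p%:R ^+ 2 - p%:R * (w + Num.conj w) + 1) * pi x)].
Proof.
move=> p_prime m_gt0 pi_char.
have ramified := Dop_pi_ramified p_prime m_gt0 pi_char.
have unramified := Dop_pi_unramified p_prime m_gt0 pi_char.
split=> [||triv w x]; last exact: unramified.
- case: (pselect (char_trivial (pihat pi))) => [triv|ntriv].
    by eexists => x; apply: (unramified x triv).
  have [n cond] := pihat_conductor p_prime m_gt0 pi_char.
  by eexists => x; apply: (ramified n x ntriv cond).
- by move=> n ntriv cond x; apply: ramified.
Qed.
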